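(* Let $G$ be a finite Weetman graph and let $v_0\in V(G)$. Then the cluster graph $\mathcal{C}(G)$ of $G$ with respect to $v_0$ is a tree.
   Context: All graphs are simple and connected; $d$ is graph distance and $\mathrm{pred}_{v_0}(v)=\{u : uv\in E(G),\ d(v_0,u)=d(v_0,v)-1\}$. $G$ is Weetman if for every vertex $v_0$: (Triangle Condition) for every two adjacent vertices $v,v'$ with $d(v_0,v)=d(v_0,v')=k$, there is $u$ with $d(v_0,u)=k-1$ and $uv,uv'\in E(G)$; (Interval Condition) for every vertex $v$, the subgraph induced by $\mathrm{pred}_{v_0}(v)$ is connected. For $i\ge0$ let $S^i=\{v: d(v_0,v)=i\}$. The clusters with respect to $v_0$ are the vertex sets of the connected components of the induced subgraphs $G[S^i]$, $i\ge 0$. The cluster graph $\mathcal{C}(G)$ has the clusters as vertices, two distinct clusters $C,C'$ being adjacent iff some $v\in C$, $v'\in C'$ satisfy $vv'\in E(G)$. *)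

From mathcomp Require Import all_boot.
Set Implicit Arguments. Unset Strict Implicit. Unset Printing Implicit Defensive.

Section Graph.
Variables (T : finType) (e : rel T).

Definition simple_graph : Prop := symmetric e /\ irreflexive e.
Definition graph_connected : Prop := forall x y : T, connect e x y.

Definition ball (n : nat) (x : T) : {set T} :=
  iter n (fun S : {set T} => S :|: [set y | [exists z in S, e z y]]) [set x].

(* graph distance (least n with y in ball n x; meaningful for connected graphs) *)
Definition dist (x y : T) : nat := find (fun n => y \in ball n x) (iota 0 #|T|).

Definition predset (v0 v : T) : {set T} :=
  [set u | e u v && (dist v0 u + 1 == dist v0 v)].

Definition induced_connected (S : {set T}) : Prop :=
  forall x y, x \in S -> y \in S ->
    connect (fun a b => [&& e a b, a \in S & b \in S]) x y.

Definition triangle_condition (v0 : T) : Prop :=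
  forall v v' : T, e v v' -> dist v0 v = dist v0 v' ->
    exists u, dist v0 u + 1 = dist v0 v /\ e u v /\ e u v'.

Definition interval_condition (v0 : T) : Prop :=
  forall v : T, induced_connected (predset v0 v).

Definition weetman : Prop :=
  forall v0 : T, triangle_condition v0 /\ interval_condition v0.

(* clusters with respect to v0: components of G[S^i] *)
Definition level_edge (v0 : T) : rel T :=
  fun a b => e a b && (dist v0 a == dist v0 b).
Definition cluster (v0 v : T) : {set T} := [set w | connect (level_edge v0) v w].
Definition clusters (v0 : T) : {set {set T}} := [set cluster v0 v | v in T].

Definition cluster_adj : rel {set T} :=
  fun C C' => (C != C') && [exists v in C, exists v' in C', e v v'].

End Graph.

Definition is_tree (U : finType) (V : {set U}) (r : rel U) : Prop :=
  (forall x y, x \in V -> y \in V ->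
     connect (fun a b => [&& r a b, a \in V & b \in V]) x y) /\
  (forall p : seq U, all (mem V) p -> uniq p -> 3 <= size p -> ~~ cycle r p).

(* Every cycle of clusters contains a cluster C of maximal level, and its two
   neighbours on the cycle, being adjacent to C without lying above it, lie
   exactly one level below C.  A neighbour one level below C is the cluster of
   a predecessor of some vertex of C, and all predecessors of vertices of C lie
   in one cluster: along an edge inside C the Triangle Condition supplies a
   common predecessor, and the predecessors of a single vertex are joined by
   the Interval Condition through vertices of the same level.  So the two
   neighbours coincide, contradicting the cycle having at least three
   clusters. *)
From mathcomp Require Import all_boot.
From mathcomp Require Import zify.
Set Implicit Arguments. Unset Strict Implicit. Unset Printing Implicit Defensive.

Lemma cycle_neighbours (U : eqType) (r : rel U) (p : seq U) x :
  cycle r p -> uniq p -> 3 <= size p -> x \in p ->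
  exists y z, [/\ y \in p, z \in p, y != z, r x y & r z x].
Proof.
move=> rp up sp /rot_to[i s rot_p].
have : cycle r (x :: s) by rewrite -rot_p rot_cycle.
have : uniq (x :: s) by rewrite -rot_p rot_uniq.
have : 3 <= size (x :: s) by rewrite -rot_p size_rot.
have sub_p : {subset x :: s <= p} by move=> y; rewrite -rot_p mem_rot.
case: s sub_p {rot_p} => [|y s] //; case/lastP: s => [|s z] // sub_p _.
move=> /= /and3P[_ y_notin _]; rewrite rcons_path last_rcons.
move=> /andP[rxy /andP[_ rzx]]; exists y, z; split=> //.
- by apply: sub_p; rewrite !inE eqxx orbT.
- by apply: sub_p; rewrite !inE mem_rcons mem_head !orbT.
- by apply: contraNneq y_notin => ->; rewrite mem_rcons mem_head.
Qed.

Section Distance.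
Variables (T : finType) (e : rel T).

Lemma ball_step n x y z : y \in ball e n x -> e y z -> z \in ball e n.+1 x.
Proof.
move=> y_ball eyz; rewrite /ball iterS -/(ball e n x) !inE.
by apply/orP; right; apply/exists_inP; exists y.
Qed.

Lemma mem_ball_last x p : path e x p -> last x p \in ball e (size p) x.
Proof.
elim/last_ind: p => [|p z IHp]; first by rewrite /ball /= inE.
rewrite rcons_path last_rcons size_rcons => /andP[xp ez].
exact: ball_step (IHp xp) ez.
Qed.

Lemma dist_le_ball x y n : y \in ball e n x -> dist e x y <= n.
Proof.
move=> y_ball; rewrite /dist; have [n_lt | n_ge] := ltnP n #|T|.
  rewrite leqNgt; apply/negP => /(before_find 0).
  by rewrite nth_iota // add0n y_ball.
by apply: leq_trans (find_size _ _) _; rewrite size_iota.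
Qed.

Hypothesis e_conn : graph_connected e.

Lemma mem_ball_dist x y : y \in ball e (dist e x y) x.
Proof.
have /connectP[p xp ->] := e_conn x y.
have [q xq q_uniq _] := shortenP xp.
have size_q : size q < #|T| by move/card_uniqP: q_uniq => /= <-; exact: max_card.
have has_q : has (fun n => last x q \in ball e n x) (iota 0 #|T|).
  by apply/hasP; exists (size q); rewrite ?mem_iota ?mem_ball_last.
have find_lt := has_q; rewrite has_find size_iota in find_lt.
by have := nth_find 0 has_q; rewrite nth_iota // add0n.
Qed.

Lemma dist_edge x a b : e a b -> dist e x b <= (dist e x a).+1.
Proof. by move=> eab; apply/dist_le_ball/(ball_step (mem_ball_dist x a)). Qed.

End Distance.

Section Clusters.
Variables (T : finType) (e : rel T) (v0 : T).

Definition level (C : {set T}) : nat := \max_(v in C) dist e v0 v.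

Lemma mem_cluster v : v \in cluster e v0 v.
Proof. by rewrite inE connect0. Qed.

Lemma dist_connect_level a b :
  connect (level_edge e v0) a b -> dist e v0 a = dist e v0 b.
Proof.
move=> ab; apply/eqP; set P := [pred x | dist e v0 x == dist e v0 b].
have P_closed : closed (level_edge e v0) P.
  by move=> x y /andP[_ /eqP xy]; rewrite !inE xy.
by rewrite -[_ == _]/(a \in P) (closed_connect P_closed ab) inE.
Qed.

Lemma level_cluster v : level (cluster e v0 v) = dist e v0 v.
Proof.
apply/eqP; rewrite eqn_leq (leq_bigmax_cond _ (mem_cluster v)) andbT.
by apply/bigmax_leqP => w; rewrite inE => /dist_connect_level <-.
Qed.

Lemma clusters_connect x y :
  connect e x y ->
  connect (fun C D => [&& cluster_adj e C D, C \in clusters e v0 & D \in clusters e v0])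
    (cluster e v0 x) (cluster e v0 y).
Proof.
move=> /connectP[p xp ->]; elim: p x xp => [|z p IHp] x /=; first by rewrite connect0.
move=> /andP[exz zp]; apply: connect_trans (IHp _ zp).
have [-> | neq_xz] := eqVneq (cluster e v0 x) (cluster e v0 z); first exact: connect0.
apply: connect1; rewrite /cluster_adj neq_xz !imset_f //= andbT.
by apply/exists_inP; exists x; rewrite ?mem_cluster //; apply/exists_inP; exists z;
  rewrite ?mem_cluster.
Qed.

Lemma predset_connect_level w u u' :
  interval_condition e v0 -> u \in predset e v0 w -> u' \in predset e v0 w ->
  connect (level_edge e v0) u u'.
Proof.
move=> interval u_pred u'_pred; apply: connect_sub (interval w u u' u_pred u'_pred).
move=> a b /and3P[eab]; rewrite !inE => /andP[_ /eqP da] /andP[_ /eqP db].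
by apply: connect1; rewrite /level_edge eab -(eqn_add2r 1) da db /=.
Qed.

Lemma predset_connect w w' u u' :
  triangle_condition e v0 -> interval_condition e v0 ->
  connect (level_edge e v0) w w' ->
  u \in predset e v0 w -> u' \in predset e v0 w' -> connect (level_edge e v0) u u'.
Proof.
move=> triangle interval /connectP[p wp ->] {w'}.
elim: p w u wp => [|z p IHp] w u /=; first by move=> _; apply: predset_connect_level.
move=> /andP[/andP[ewz /eqP dwz] zp] u_pred u'_pred.
have [t [dt [etw etz]]] := triangle w z ewz dwz.
have t_pred_w : t \in predset e v0 w by rewrite inE etw dt eqxx.
apply: connect_trans (predset_connect_level interval u_pred t_pred_w) _.
by apply: IHp zp _ u'_pred; rewrite inE etz dt dwz eqxx.
Qed.

Hypothesis e_sym : symmetric e.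

Lemma level_edge_sym : symmetric (level_edge e v0).
Proof. by move=> a b; rewrite /level_edge e_sym eq_sym. Qed.

Lemma cluster_eq v w : w \in cluster e v0 v -> cluster e v0 w = cluster e v0 v.
Proof.
rewrite inE => vw; apply/setP => x; rewrite !inE.
by rewrite (same_connect (sym_connect_sym level_edge_sym) vw).
Qed.

Lemma clusters_mem_eq C v : C \in clusters e v0 -> v \in C -> C = cluster e v0 v.
Proof. by move=> /imsetP[a _ ->] /cluster_eq. Qed.

Lemma cluster_adj_sym : symmetric (cluster_adj e).
Proof.
move=> C D; rewrite /cluster_adj eq_sym; congr (_ && _).
by apply/exists_inP/exists_inP => -[v vC /exists_inP[v' v'D evv']];
  exists v' => //; apply/exists_inP; exists v => //; rewrite e_sym.
Qed.

Hypothesis e_conn : graph_connected e.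

Lemma dist_adj_clusters v v' :
  e v v' -> cluster e v0 v != cluster e v0 v' ->
  dist e v0 v' = (dist e v0 v).+1 \/ dist e v0 v = (dist e v0 v').+1.
Proof.
move=> evv' neq_vv'.
have le_vv' := dist_edge e_conn v0 evv'.
have le_v'v : dist e v0 v <= (dist e v0 v').+1.
  by apply: (dist_edge e_conn); rewrite e_sym.
have neq_dist : dist e v0 v != dist e v0 v'.
  apply: contra neq_vv' => /eqP dvv'; rewrite eq_sym; apply/eqP/cluster_eq.
  by rewrite inE connect1 // /level_edge evv' dvv' eqxx.
lia.
Qed.

Lemma cluster_adj_below C D :
  C \in clusters e v0 -> D \in clusters e v0 -> cluster_adj e C D ->
  level D <= level C ->
  exists v v', [/\ v \in C, v' \in predset e v0 v & D = cluster e v0 v'].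
Proof.
move=> C_cl D_cl /andP[neq_CD /exists_inP[v vC /exists_inP[v' v'D evv']]].
rewrite (clusters_mem_eq C_cl vC) (clusters_mem_eq D_cl v'D) in neq_CD *.
rewrite !level_cluster => le_dist; exists v, v'; split; rewrite ?mem_cluster //.
rewrite inE e_sym evv' addn1; have [dv' | ->] := dist_adj_clusters evv' neq_CD.
  by rewrite dv' ltnn in le_dist.
by rewrite eqxx.
Qed.

Lemma lower_neighbour_unique C D1 D2 :
  triangle_condition e v0 -> interval_condition e v0 ->
  C \in clusters e v0 -> D1 \in clusters e v0 -> D2 \in clusters e v0 ->
  cluster_adj e C D1 -> cluster_adj e C D2 ->
  level D1 <= level C -> level D2 <= level C -> D1 = D2.
Proof.
move=> triangle interval C_cl D1_cl D2_cl CD1 CD2 le1 le2.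
have [v [v1 [vC v1_pred ->]]] := cluster_adj_below C_cl D1_cl CD1 le1.
have [w [w2 [wC w2_pred ->]]] := cluster_adj_below C_cl D2_cl CD2 le2.
have vw : connect (level_edge e v0) v w.
  by move: wC; rewrite (clusters_mem_eq C_cl vC) inE.
apply/esym/cluster_eq; rewrite inE.
exact: predset_connect triangle interval vw v1_pred w2_pred.
Qed.

Lemma clusters_acyclic p :
  triangle_condition e v0 -> interval_condition e v0 ->
  all (mem (clusters e v0)) p -> uniq p -> 3 <= size p -> ~~ cycle (cluster_adj e) p.
Proof.
move=> triangle interval p_cl p_uniq p_size; apply/negP => p_cycle.
case: p p_cl p_uniq p_size p_cycle => [|C0 p0] // p_cl p_uniq p_size p_cycle.
have [C C_p C_max] := @arg_maxnP _ C0 (mem (C0 :: p0)) level (mem_head _ _).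
have [D1 [D2 [D1_p D2_p neq_D12 CD1 D2C]]] :=
  cycle_neighbours p_cycle p_uniq p_size C_p.
have cl := allP p_cl.
move/eqP: neq_D12; apply.
apply: lower_neighbour_unique triangle interval _ _ _ CD1 _ _ _;
  by [apply: cl | rewrite cluster_adj_sym | apply: C_max].
Qed.

End Clusters.

Theorem mainTheorem4 (T : finType) (e : rel T)
  (Hsimple : simple_graph e) (Hconn : graph_connected e) (Hw : weetman e)
  (v0 : T) :
  is_tree (clusters e v0) (cluster_adj e).
Proof.
have [e_sym _] := Hsimple; have [triangle interval] := Hw v0.
split; last by move=> p; apply: clusters_acyclic.
by move=> _ _ /imsetP[a _ ->] /imsetP[b _ ->]; apply/clusters_connect/Hconn.
Qed.
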